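(* Let $G$ be a graph with a tree-representation $\{T(v)\}$ in which every subtree $T(v)$ is a downward path in the host tree. Then any bottom-up enumeration order $v_1,\dots,v_n$ of the vertices is a strong elimination order of $G$.
   Context: Graphs are finite and simple; $N[v]$ denotes the closed neighbourhood of $v$. A host tree $T$ is a rooted tree whose arcs carry positive integer weights; the depth of a node is the sum of arc weights on its path to the root. A subtree is a connected node set of $T$; its root is its node of smallest depth. A downward path is the node set of the path from a node to one of its descendants. A tree-representation of $G$ assigns to each vertex $v$ a subtree $T(v)$ of $T$ such that for distinct $v,w$, $(v,w)$ is an edge iff $T(v)\cap T(w)\neq\emptyset$. A bottom-up enumeration order is an ordering $v_1,\dots,v_n$ of the vertices in which the depths of the roots of $T(v_1),\dots,T(v_n)$ are non-increasing (ties broken arbitrarily). A strong elimination order is an ordering $v_1,\dots,v_n$ of the vertices such that for all $i,j,k,\ell$: if $i<j$, $k<\ell$, $v_k,v_\ell\in N[v_i]$ and $v_k\in N[v_j]$, then $v_\ell\in N[v_j]$. *)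

From mathcomp Require Import all_boot.
Set Implicit Arguments. Unset Strict Implicit. Unset Printing Implicit Defensive.

(* ---------- Host tree ----------
   A rooted tree on the node type N is given by a parent function [par],
   a root [r] with [par r = r], such that every node reaches [r] by
   iterating [par]; the arc (x, par x) (x <> r) carries weight [w x],
   a positive integer. *)

Definition is_weighted_rooted_tree (N : finType) (par : N -> N) (r : N)
  (w : N -> nat) : Prop :=
  par r = r /\ (forall x : N, exists k, iter k par x = r)
  /\ (forall x : N, x != r -> 0 < w x).

(* depth = sum of arc weights on the path to the root (fuel #|N| suffices) *)
Fixpoint depth_fuel (N : finType) (par : N -> N) (r : N) (w : N -> nat)
  (k : nat) (x : N) : nat :=
  match k with
  | 0 => 0
  | k'.+1 => if x == r then 0 else w x + depth_fuel par r w k' (par x)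
  end.

Definition depth (N : finType) (par : N -> N) (r : N) (w : N -> nat) (x : N)
  : nat := depth_fuel par r w #|N| x.

Definition tree_adj (N : finType) (par : N -> N) (r : N) : rel N :=
  fun x y => ((x != r) && (par x == y)) || ((y != r) && (par y == x)).

Definition is_subtree (N : finType) (par : N -> N) (r : N) (S : {set N})
  : Prop :=
  S != set0 /\
  forall x y, x \in S -> y \in S ->
    connect (fun a b => [&& tree_adj par r a b, a \in S & b \in S]) x y.

Definition anc (N : finType) (par : N -> N) (a b : N) : Prop :=
  exists k, iter k par b = a.

Definition is_downward_path (N : finType) (par : N -> N) (S : {set N})
  : Prop :=
  exists a b, anc par a b /\
    forall x, x \in S <-> (anc par a x /\ anc par x b).

Definition is_subtree_root (N : finType) (par : N -> N) (r : N)
  (w : N -> nat) (S : {set N}) (x : N) : Prop :=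
  x \in S /\ forall y, y \in S -> depth par r w x <= depth par r w y.

Definition is_simple_graph (V : finType) (adj : rel V) : Prop :=
  symmetric adj /\ irreflexive adj.

Definition cnbhd (V : finType) (adj : rel V) (v : V) : {set V} :=
  [set u | (u == v) || adj v u].

Definition is_tree_representation (V N : finType) (adj : rel V)
  (par : N -> N) (r : N) (T : V -> {set N}) : Prop :=
  (forall v, is_subtree par r (T v)) /\
  (forall v u, v != u -> (adj v u <-> T v :&: T u != set0)).

(* orderings v_1..v_n are bijections o : 'I_n -> V *)
Definition is_bottom_up_order (V N : finType) (par : N -> N) (r : N)
  (w : N -> nat) (T : V -> {set N}) (n : nat) (o : 'I_n -> V) : Prop :=
  bijective o /\
  forall (i j : 'I_n) (xi xj : N), i < j ->
    is_subtree_root par r w (T (o i)) xi ->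
    is_subtree_root par r w (T (o j)) xj ->
    depth par r w xj <= depth par r w xi.

Definition is_strong_elimination_order (V : finType) (adj : rel V) (n : nat)
  (o : 'I_n -> V) : Prop :=
  bijective o /\
  forall i j k l : 'I_n, i < j -> k < l ->
    o k \in cnbhd adj (o i) -> o l \in cnbhd adj (o i) ->
    o k \in cnbhd adj (o j) -> o l \in cnbhd adj (o j).

From mathcomp Require Import all_boot.
Set Implicit Arguments. Unset Strict Implicit. Unset Printing Implicit Defensive.

(* Write d for depth and [a, b] for the downward path with top a.  Two
   downward paths meet iff the top of the deeper one lies on the other, and if
   [a, b] and [a', b'] share a node x and d a' <= d a, then [a', b'] contains
   every node of [a, b] above x.
   Now let i < j, k < l with the path of i meeting those of k and l, and the
   path of j meeting that of k.  If d a_i <= d a_k, then a_k lies on the paths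
   of i and j, and the meeting point of i and l may be taken above a_k, hence
   on the path of j.  Otherwise a_i lies on the paths of k and l, and the same
   argument applies with (i, l) and (k, j) exchanged. *)

Lemma anc_refl (N : finType) (par : N -> N) (a : N) : anc par a a.
Proof. by exists 0. Qed.

Lemma anc_trans (N : finType) (par : N -> N) (a b c : N) :
  anc par a b -> anc par b c -> anc par a c.
Proof. by move=> [k <-] [m <-]; exists (k + m); rewrite iterD. Qed.

Lemma anc_total (N : finType) (par : N -> N) (a b x : N) :
  anc par a x -> anc par b x -> anc par a b \/ anc par b a.
Proof.
move=> [k <-] [m <-]; case: (leqP k m) => [km | /ltnW mk].
  by right; exists (m - k); rewrite -iterD subnK.
by left; exists (k - m); rewrite -iterD subnK.
Qed.

Section DownwardPaths.

Variables (N : finType) (par : N -> N) (r : N) (w : N -> nat).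
Hypothesis tree : is_weighted_rooted_tree par r w.

Local Notation d := (depth par r w).

Lemma depth_fuel_stable (m : nat) (x : N) (k : nat) :
  iter m par x = r -> m <= k ->
  depth_fuel par r w k x = depth_fuel par r w m x.
Proof.
have [par_r _] := tree.
elim: m x k => [|m IH] x [|k] //=; first by move=> -> _; rewrite eqxx.
move=> reach mk; case: eqP => // _.
by rewrite (IH (par x)) // -iterSr.
Qed.

Lemma reach_root_lt_card (x : N) : exists2 m, m < #|N| & iter m par x = r.
Proof.
have [_ [reach _]] := tree; have [k xk] := reach x.
have x_r : fconnect par x r by rewrite -xk fconnect_iter.
exists (findex par x r); last exact: iter_findex.
exact: leq_trans (findex_max x_r) (max_card _).
Qed.

Lemma depth_parE (x : N) : x != r -> d x = w x + d (par x).
Proof.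
move=> xr; have [m m_lt reach] := reach_root_lt_card (par x).
rewrite /depth; case: #|N| m_lt => [|n] // m_le /=.
rewrite (negbTE xr); congr (_ + _).
rewrite -[RHS]/(depth_fuel par r w n.+1 (par x)).
by rewrite !(depth_fuel_stable reach) // ltnW.
Qed.

Lemma depth_par_le (x : N) : d (par x) <= d x.
Proof.
have [par_r _] := tree.
case: (eqVneq x r) => [-> | xr]; first by rewrite par_r.
by rewrite (depth_parE xr) leq_addl.
Qed.

Lemma depth_par_lt (x : N) : x != r -> d (par x) < d x.
Proof.
have [_ [_ w_pos]] := tree.
by move=> xr; rewrite (depth_parE xr) -{1}[d (par x)]add0n ltn_add2r w_pos.
Qed.

Lemma depth_anc_lt (a b : N) : anc par a b -> a != b -> d a < d b.
Proof.
have [par_r _] := tree.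
move=> [k <-]; elim: k b => [|k IH] b; first by rewrite eqxx.
rewrite iterSr; case: (eqVneq (iter k par (par b)) (par b)) => [-> pb_b | ne _].
  by apply: depth_par_lt; apply: contra_neq pb_b => ->.
exact: leq_trans (IH _ ne) (depth_par_le b).
Qed.

Lemma depth_anc (a b : N) : anc par a b -> d a <= d b.
Proof.
by move=> ab; case: (eqVneq a b) => [-> // | ne]; apply/ltnW/depth_anc_lt.
Qed.

Lemma anc_depth_le (a b x : N) :
  anc par a x -> anc par b x -> d a <= d b -> anc par a b.
Proof.
move=> ax bx ab; case: (anc_total ax bx) => // ba.
case: (eqVneq b a) => [-> | ne]; first exact: anc_refl.
by have := leq_trans (depth_anc_lt ba ne) ab; rewrite ltnn.
Qed.

Definition on_dpath (p : N * N) (x : N) : Prop :=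
  anc par p.1 x /\ anc par x p.2.

Definition dpaths_meet (p q : N * N) : Prop :=
  exists x, on_dpath p x /\ on_dpath q x.

Lemma dpaths_meet_top (p q : N * N) :
  dpaths_meet p q -> d p.1 <= d q.1 -> on_dpath p q.1.
Proof.
move=> [x [[px xp] [qx xq]]] pq.
by split; [exact: anc_depth_le px qx pq | exact: anc_trans qx xp].
Qed.

Lemma on_dpath_above (p q : N * N) (x y : N) :
  on_dpath q x -> d q.1 <= d p.1 -> on_dpath p y -> anc par y x ->
  on_dpath q y.
Proof.
move=> [qx xq] qp [py _] yx; split; last exact: anc_trans yx xq.
exact: anc_depth_le qx yx (leq_trans qp (depth_anc py)).
Qed.

Lemma on_dpath_top (p : N * N) (x : N) : on_dpath p x -> on_dpath p p.1.
Proof. by move=> [px xp]; split; [exact: anc_refl | exact: anc_trans px xp]. Qed.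

Lemma dpaths_meet_sym (p q : N * N) : dpaths_meet p q -> dpaths_meet q p.
Proof. by move=> [x [px qx]]; exists x. Qed.

Lemma dpaths_meet_above (p q : N * N) (x : N) :
  dpaths_meet p q -> on_dpath p x -> d q.1 <= d x ->
  exists2 y, on_dpath p y /\ on_dpath q y & anc par y x.
Proof.
move=> pq [px xp] qx.
have above_x (y : N) : on_dpath p y -> d y <= d x -> anc par y x.
  by move=> [_ yp] yx; apply: anc_depth_le yp xp yx.
have [x' [px' qx']] := pq.
case: (leqP (d p.1) (d q.1)) => [le_pq | /ltnW le_qp].
  have q1_p := dpaths_meet_top pq le_pq.
  by exists q.1; [split; last exact: on_dpath_top qx' | exact: above_x q1_p qx].
have p1_q := dpaths_meet_top (dpaths_meet_sym pq) le_qp.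
have p1_p := on_dpath_top px'.
by exists p.1; [split | exact: above_x p1_p (depth_anc px)].
Qed.

Lemma dpaths_meet_transfer (p q s : N * N) (x : N) :
  on_dpath p x -> on_dpath q x -> d q.1 <= d p.1 -> d s.1 <= d x ->
  dpaths_meet p s -> dpaths_meet q s.
Proof.
move=> px qx qp sx ps; have [y [py sy] yx] := dpaths_meet_above ps px sx.
by exists y; split=> //; apply: on_dpath_above qx qp py yx.
Qed.

Lemma dpaths_meet_strong_elim (pi pj pk pl : N * N) :
  d pj.1 <= d pi.1 -> d pl.1 <= d pk.1 ->
  dpaths_meet pi pk -> dpaths_meet pi pl -> dpaths_meet pj pk ->
  dpaths_meet pj pl.
Proof.
move=> ji lk ik il jk.
case: (leqP (d pi.1) (d pk.1)) => [le_ik | /ltnW le_ki].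
  have i_k := dpaths_meet_top ik le_ik.
  have j_k := dpaths_meet_top jk (leq_trans ji le_ik).
  exact: dpaths_meet_transfer i_k j_k ji lk il.
have k_i := dpaths_meet_top (dpaths_meet_sym ik) le_ki.
have l_i := dpaths_meet_top (dpaths_meet_sym il) (leq_trans lk le_ki).
apply/dpaths_meet_sym/(dpaths_meet_transfer k_i l_i lk ji).
exact: dpaths_meet_sym.
Qed.

Lemma downward_path_top (S : {set N}) :
  is_downward_path par S ->
  exists2 p : N * N, (forall x, x \in S <-> on_dpath p x)
                   & is_subtree_root par r w S p.1.
Proof.
move=> [a [b [ab Sab]]]; exists (a, b) => //.
split; first by apply/Sab; split; [exact: anc_refl |].
by move=> y /Sab [ay _]; apply: depth_anc.
Qed.

Lemma setI_dpaths_meet (S S' : {set N}) (p q : N * N) :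
  (forall x, x \in S <-> on_dpath p x) ->
  (forall x, x \in S' <-> on_dpath q x) ->
  S :&: S' != set0 <-> dpaths_meet p q.
Proof.
move=> Sp S'q; split.
  by case/set0Pn=> x; rewrite inE => /andP [/Sp px /S'q qx]; exists x.
by move=> [x [/Sp Sx /S'q S'x]]; apply/set0Pn; exists x; rewrite inE Sx.
Qed.

End DownwardPaths.

Lemma mem_cnbhd_rep (V N : finType) (adj : rel V) (T : V -> {set N}) :
  (forall v, T v != set0) ->
  (forall v u, v != u -> (adj v u <-> T v :&: T u != set0)) ->
  forall u v, (v \in cnbhd adj u) = (T u :&: T v != set0).
Proof.
move=> T_nonempty rep u v; rewrite inE.
case: (eqVneq v u) => [-> | vu] /=; first by rewrite setIid T_nonempty.
have uv : u != v by rewrite eq_sym.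
by apply/idP/idP => /(rep _ _ uv).
Qed.

Theorem corollary1 (V N : finType) (adj : rel V) (par : N -> N) (r : N)
  (w : N -> nat) (T : V -> {set N}) (n : nat) (o : 'I_n -> V) :
  is_simple_graph adj ->
  is_weighted_rooted_tree par r w ->
  is_tree_representation adj par r T ->
  (forall v, is_downward_path par (T v)) ->
  is_bottom_up_order par r w T o ->
  is_strong_elimination_order adj o.
Proof.
move=> _ tree [subtree rep] dpath [o_bij bottom_up]; split=> // i j k l ij kl.
have T_nonempty v : T v != set0 by case: (subtree v).
rewrite !(mem_cnbhd_rep T_nonempty rep).
have [pi Ti i_top] := downward_path_top tree (dpath (o i)).
have [pj Tj j_top] := downward_path_top tree (dpath (o j)).
have [pk Tk k_top] := downward_path_top tree (dpath (o k)).
have [pl Tl l_top] := downward_path_top tree (dpath (o l)).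
move=> /(setI_dpaths_meet Ti Tk) ik /(setI_dpaths_meet Ti Tl) il.
move=> /(setI_dpaths_meet Tj Tk) jk; apply/(setI_dpaths_meet Tj Tl).
apply: (dpaths_meet_strong_elim tree _ _ ik il jk).
- exact: bottom_up ij i_top j_top.
- exact: bottom_up kl k_top l_top.
Qed.
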